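(* Let $q$ be a power of an odd prime and let $\lambda\in\mathbb{F}_q$ with $\lambda\neq 0,1,-3$. Let $C_\lambda/\mathbb{F}_q$ be the plane quartic $x^4+y^4+z^4=(\lambda+1)(x^2y^2+y^2z^2+z^2x^2)$ and let $E^{(\lambda+3)}_\lambda/\mathbb{F}_q$ be the elliptic curve $(\lambda+3)y^2=x(x-1)(x-\lambda)$. Then $$\#C_\lambda(\mathbb{F}_q)=3\,\#E^{(\lambda+3)}_\lambda(\mathbb{F}_q)-2q-2.$$
   Context: For such $\lambda$, $C_\lambda$ is a smooth, geometrically irreducible plane curve of genus $3$; $\#X(\mathbb{F}_q)$ denotes the number of $\mathbb{F}_q$-rational points (for the quartic, points of the projective plane curve). *)

From HB Require Import structures.
From mathcomp Require Import all_boot all_order all_algebra all_field.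
Set Implicit Arguments. Unset Strict Implicit. Unset Printing Implicit Defensive.
Import GRing.Theory.
Local Open Scope ring_scope.

(* Canonical representatives of the points of the projective plane P^2(F):
   (1:y:z), (0:1:z), (0:0:1). *)
Definition proj_rep (F : finFieldType) (p : F * F * F) : bool :=
  let: (x, y, z) := p in
  [|| x == 1, (x == 0) && (y == 1) | [&& x == 0, y == 0 & z == 1]].

Definition nb_proj_points (F : finFieldType) (P : F -> F -> F -> F) : nat :=
  #|[set p : F * F * F | proj_rep p && (P p.1.1 p.1.2 p.2 == 0)]|.

Definition quartic_C (F : finFieldType) (lam : F) (x y z : F) : F :=
  x ^+ 4 + y ^+ 4 + z ^+ 4
  - (lam + 1) * (x ^+ 2 * y ^+ 2 + y ^+ 2 * z ^+ 2 + z ^+ 2 * x ^+ 2).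

(* Projective closure of E : (lambda+3) y^2 = x (x-1) (x-lambda):
   (lambda+3) y^2 z = x (x - z) (x - lambda z). *)
Definition cubic_E (F : finFieldType) (lam : F) (x y z : F) : F :=
  (lam + 3) * y ^+ 2 * z - x * (x - z) * (x - lam * z).

(* With X = x^2, Y = y^2, Z = z^2 the quartic C is the pull-back of the conic
   Q : X^2 + Y^2 + Z^2 = (lam + 1) (XY + YZ + ZX), so the affine cone over C is
   counted by the points of the cone over Q weighted by
   (1 + chi X) (1 + chi Y) (1 + chi Z), chi the quadratic character. Scaling by
   a non-square kills the terms of odd degree in chi, the cyclic symmetry of Q
   identifies the three terms chi X chi Y, chi Y chi Z, chi Z chi X, and the
   cone over Q has q^2 points. Solving Q for Z, the term chi X chi Y becomes,
   up to a vanishing sum, the sum of chi (X Y Delta(X, Y)) with Delta the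
   discriminant, which dehomogenises to the sum of chi (t Delta(t, 1)) over t;
   the substitution s = t + 1/t and an affine change of variable turn it into
   the sum S of chi ((lam + 3) x (x - 1) (x - lam)). Since the affine cone over
   a projective curve X has 1 + (q - 1) #X points, #C = q + 1 + 3 S and
   #E = q + 1 + S. *)

From HB Require Import structures.
From mathcomp Require Import all_boot all_order all_algebra all_field.
From mathcomp Require Import ring zify.
Set Implicit Arguments. Unset Strict Implicit. Unset Printing Implicit Defensive.
Import Order.TTheory GRing.Theory Num.Theory.
Local Open Scope ring_scope.

Local Notation ind b := ((b : bool)%:R : int).

Lemma sum_ind_card (T : finType) (P : pred T) : \sum_(x : T) ind (P x) = #|P|%:R.
Proof.
rewrite -sum1_card natr_sum [RHS]big_mkcond /=; apply: eq_bigr => x _.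
by rewrite unfold_in; case: (P x).
Qed.

Section QuadraticCharacter.
Variable F : finFieldType.
Local Notation q := (#|F|%:R : int).

Lemma sum_ind_eq (a : F) : \sum_(x : F) ind (x == a) = 1.
Proof. by rewrite sum_ind_card (eq_card (B := pred1 a)) // card1. Qed.

Lemma sum_ind_eq_mul (a : F) (f : F -> int) : \sum_(x : F) ind (x == a) * f x = f a.
Proof.
rewrite (bigD1 a) //= eqxx mul1r big1 ?addr0 // => x.
by move/negbTE->; rewrite mul0r.
Qed.

Lemma sum_ind_neq0 : \sum_(x : F) ind (x != 0) = q - 1.
Proof.
rewrite (eq_bigr (fun x => 1 - ind (x == 0))); last by move=> x _; case: (x == 0).
by rewrite sumrB sum_ind_eq sumr_const.
Qed.

Lemma sum_neq0_const (K : int) : \sum_(x : F | x != 0) K = (q - 1) * K.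
Proof.
rewrite big_mkcond -sum_ind_neq0 mulr_suml; apply: eq_bigr => x _.
by case: (x != 0); rewrite ?mul1r ?mul0r.
Qed.

Lemma sum_reindex_mull (V : nmodType) (a : F) (f : F -> V) :
  a != 0 -> \sum_(x : F) f (a * x) = \sum_(x : F) f x.
Proof. by move=> a0; rewrite [RHS](reindex_inj (mulfI a0)). Qed.

Lemma sum_reindex_affine (V : nmodType) (a b : F) (f : F -> V) :
  a != 0 -> \sum_(x : F) f (a * x + b) = \sum_(x : F) f x.
Proof.
move=> a0; rewrite [RHS](reindex_inj (h := fun x => a * x + b)) //.
by move=> x y /addIr /mulfI; apply.
Qed.

Definition nsqrt (x : F) : int := \sum_(t : F) ind (t ^+ 2 == x).
Definition chi (x : F) : int := nsqrt x - 1.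

Lemma nsqrt0 : nsqrt 0 = 1.
Proof. by rewrite -(sum_ind_eq 0); apply: eq_bigr => t _; rewrite expf_eq0. Qed.

Lemma nsqrt_sqrM (s y : F) : s != 0 -> nsqrt (s ^+ 2 * y) = nsqrt y.
Proof.
move=> s0; rewrite /nsqrt -(sum_reindex_mull _ s0).
by apply: eq_bigr => t _; rewrite exprMn (inj_eq (mulfI _)) // expf_neq0.
Qed.

Lemma sum_nsqrt : \sum_(x : F) nsqrt x = q.
Proof.
rewrite exchange_big (eq_bigr (fun _ => 1)) ?sumr_const // => t _.
by under eq_bigr do rewrite eq_sym; apply: sum_ind_eq.
Qed.

Lemma sum_sqr_fiber (G : F -> int) : \sum_(x : F) G (x ^+ 2) = \sum_(X : F) nsqrt X * G X.
Proof.
under [RHS]eq_bigr do rewrite mulr_suml.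
rewrite exchange_big; apply: eq_bigr => t _.
by under eq_bigr do rewrite eq_sym; rewrite sum_ind_eq_mul.
Qed.

Lemma sqr_or_nsqrt0 (x : F) : x != 0 -> (exists2 s, s != 0 & x = s ^+ 2) \/ nsqrt x = 0.
Proof.
move=> x0; case: (pickP (fun t : F => t ^+ 2 == x)) => [s /eqP sx | nosqrt].
  by left; exists s => //; apply: contraNneq x0 => s0; rewrite -sx s0 expr0n.
by right; apply: big1 => t _; rewrite nosqrt.
Qed.

Hypothesis two_neq0 : (2%:R : F) != 0.

Lemma nsqrt_sqr (s : F) : s != 0 -> nsqrt (s ^+ 2) = 2.
Proof.
move=> s0; have sNs : s != - s.
  apply: contraNneq s0 => /eqP.
  by rewrite -addr_eq0 -mulr2n -mulr_natl mulf_eq0 (negbTE two_neq0).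
rewrite /nsqrt (eq_bigr (fun t => ind (t == s) + ind (t == - s))).
  by rewrite big_split /= !sum_ind_eq.
move=> t _; rewrite eqf_sqr.
by case: (eqVneq t s) => [->|_]; rewrite ?(negbTE sNs) ?addr0 ?add0r.
Qed.

Lemma chi0 : chi 0 = 0.
Proof. by rewrite /chi nsqrt0 subrr. Qed.

Lemma chi_sqr (s : F) : s != 0 -> chi (s ^+ 2) = 1.
Proof. by move=> s0; rewrite /chi nsqrt_sqr. Qed.

Lemma chi_sqrM (s y : F) : s != 0 -> chi (s ^+ 2 * y) = chi y.
Proof. by move=> s0; rewrite /chi nsqrt_sqrM. Qed.

Lemma chi_sum : \sum_(x : F) chi x = 0.
Proof. by rewrite /chi sumrB sum_nsqrt sumr_const subrr. Qed.

Lemma chi_unit (x : F) : x != 0 -> chi x = 1 \/ chi x = -1.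
Proof.
by case/sqr_or_nsqrt0 => [[s s0 ->]|nx]; [left; rewrite chi_sqr | right; rewrite /chi nx].
Qed.

Lemma chi_le1 (x : F) : chi x <= 1.
Proof. by case: (eqVneq x 0) => [->|/chi_unit [] ->]; rewrite ?chi0. Qed.

(* If c is a non-square, chi (c * y) + chi y is never positive and sums to
   zero over y, hence vanishes identically. *)
Lemma chi_nonsqrM (c y : F) : chi c = -1 -> chi (c * y) = - chi y.
Proof.
move=> cN1; have c0 : c != 0 by apply: contra_eqN cN1 => /eqP->; rewrite chi0.
pose g z := - (chi (c * z) + chi z).
have g_ge0 z : 0 <= g z.
  rewrite oppr_ge0; case: (eqVneq z 0) => [->|z0]; first by rewrite mulr0 chi0 addr0.
  have [[s s0 ->]|nz] := sqr_or_nsqrt0 z0.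
    by rewrite mulrC chi_sqrM // chi_sqr // cN1 addNr.
  by have := chi_le1 (c * z); rewrite /chi nz; lia.
have sum_g : \sum_z g z = 0.
  by rewrite sumrN big_split /= (sum_reindex_mull chi c0) chi_sum addr0 oppr0.
have /eqP := psumr_eq0P (fun z _ => g_ge0 z) sum_g isT (i := y).
by rewrite oppr_eq0 addr_eq0 => /eqP.
Qed.

Lemma chi_mul (x y : F) : chi (x * y) = chi x * chi y.
Proof.
case: (eqVneq x 0) => [->|x0]; first by rewrite mul0r chi0 mul0r.
have [[s s0 ->]|nx] := sqr_or_nsqrt0 x0; first by rewrite chi_sqrM // chi_sqr // mul1r.
have xN1 : chi x = -1 by rewrite /chi nx.
by rewrite chi_nonsqrM // xN1 mulN1r.
Qed.

Lemma exists_nonsqr : exists2 c, c != 0 & chi c = -1.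
Proof.
case: (pickP (fun c => chi c == -1)) => [c /eqP cN1|allsqr].
  by exists c => //; apply: contra_eqN cN1 => /eqP->; rewrite chi0.
have : \sum_(x : F) chi x = \sum_(x : F) ind (x != 0).
  apply: eq_bigr => x _; case: (eqVneq x 0) => [->|x0]; first by rewrite chi0.
  by case: (chi_unit x0) => // xN1; move: (allsqr x); rewrite xN1 eqxx.
rewrite chi_sum sum_ind_neq0 => /eqP; rewrite eq_sym subr_eq0 pnatr_eq1 => /eqP F1.
by have := finNzRing_gt1 F; rewrite F1.
Qed.

Lemma chi_affine_sum (a b : F) : a != 0 -> \sum_(x : F) chi (a * x + b) = 0.
Proof. by move=> a0; rewrite (sum_reindex_affine b chi a0) chi_sum. Qed.

(* The points of u^2 - t^2 = D are counted through (u - t) (u + t) = D. *)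
Lemma sum_nsqrt_hyperbola (D : F) : D != 0 -> \sum_(u : F) nsqrt (u ^+ 2 - D) = q - 1.
Proof.
move=> D0; rewrite /nsqrt pair_bigA /=.
pose h (p : F * F) := ((p.1 + p.2) / 2%:R, (p.2 - p.1) / 2%:R).
pose g (p : F * F) := (p.1 - p.2, p.1 + p.2).
have hK : cancel h g by case=> m k; rewrite /g /h /=; congr pair; field.
rewrite (reindex_inj (can_inj hK)) /=.
rewrite (eq_bigr (fun p => ind (p.1 * p.2 == D))); last first.
  case=> m k _ /=; congr (_%:R).
  have -> : ((k - m) / 2%:R) ^+ 2 = ((m + k) / 2%:R) ^+ 2 - m * k by field.
  by rewrite (inj_eq (addrI _)) (inj_eq (@oppr_inj _)).
rewrite -(pair_bigA _ (fun m k => ind (m * k == D))) -sum_ind_neq0 /=.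
apply: eq_bigr => m _; case: (eqVneq m 0) => [->|m0].
  by rewrite big1 // => k _; rewrite mul0r eq_sym (negbTE D0).
rewrite /= -[RHS](sum_ind_eq (D / m)); apply: eq_bigr => k _.
by rewrite -[k == _](inj_eq (mulfI m0)) [m * (D / m)]mulrC divfK.
Qed.

Lemma chi_hyperbola_sum (D : F) : D != 0 -> \sum_(u : F) chi (u ^+ 2 - D) = -1.
Proof.
by move=> D0; rewrite /chi sumrB sum_nsqrt_hyperbola // sumr_const addrAC subrr add0r.
Qed.

Lemma chi_quadratic_sum (al be ga : F) : al != 0 -> be ^+ 2 - 4%:R * al * ga != 0 ->
  \sum_(t : F) chi (al * t ^+ 2 + be * t + ga) = - chi al.
Proof.
move=> al0 disc0; pose D := (2%:R^-1) ^+ 2 * (be ^+ 2 - 4%:R * al * ga).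
have D0 : D != 0 by rewrite mulf_neq0 // expf_neq0 // invr_eq0.
rewrite (eq_bigr (fun t => chi al * chi ((al * t + be / 2%:R) ^+ 2 - D))); last first.
  move=> t _; rewrite -chi_mul.
  have -> : al * ((al * t + be / 2%:R) ^+ 2 - D) = al ^+ 2 * (al * t ^+ 2 + be * t + ga).
    by rewrite /D; field.
  by rewrite chi_sqrM.
rewrite -mulr_sumr (sum_reindex_affine (be / 2%:R) (fun u => chi (u ^+ 2 - D))) //.
by rewrite chi_hyperbola_sum // mulrN1.
Qed.

Lemma nroots_quadratic (b c : F) :
  \sum_(z : F) ind (z ^+ 2 + b * z + c == 0) = nsqrt (b ^+ 2 - 4%:R * c).
Proof.
rewrite -(@sum_reindex_affine _ 1 (- (b / 2%:R))) ?oner_eq0 //.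
rewrite -(nsqrt_sqrM _ (s := 2%:R^-1)) ?invr_eq0 //.
apply: eq_bigr => w _; congr (_%:R).
have -> : (1 * w - b / 2%:R) ^+ 2 + b * (1 * w - b / 2%:R) + c =
   w ^+ 2 - (2%:R^-1) ^+ 2 * (b ^+ 2 - 4%:R * c) by field.
by rewrite subr_eq0.
Qed.

End QuadraticCharacter.

Section ProjectiveCount.
Variable F : finFieldType.
Local Notation q := (#|F|%:R : int).

Definition nb_cone_points (P : F -> F -> F -> F) : int :=
  \sum_(x : F) \sum_(y : F) \sum_(z : F) ind (P x y z == 0).

Lemma sum_triple (f : F * F * F -> int) :
  \sum_(p : F * F * F) f p = \sum_(x : F) \sum_(y : F) \sum_(z : F) f (x, y, z).
Proof. by rewrite pair_bigA pair_bigA; apply: eq_bigr => -[[]]. Qed.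

Lemma sum_split_nonzero_const (G : F -> int) :
  (forall c, c != 0 -> G c = G 1) -> \sum_(c : F) G c = G 0 + (q - 1) * G 1.
Proof. by move=> Gc; rewrite (bigD1 0) //= -sum_neq0_const; congr (_ + _); apply: eq_bigr. Qed.

Lemma nb_proj_points_charts (P : F -> F -> F -> F) :
  (nb_proj_points P)%:Z =
    \sum_(y : F) \sum_(z : F) ind (P 1 y z == 0)
    + (\sum_(z : F) ind (P 0 1 z == 0) + ind (P 0 0 1 == 0)).
Proof.
have sum10 (G : F -> int) : (forall x, x != 1 -> x != 0 -> G x = 0) -> \sum_x G x = G 1 + G 0.
  move=> G0; rewrite (bigD1 1) //= (bigD1 0) 1?eq_sym ?oner_neq0 //= big1 ?addr0 //.
  by move=> x /andP[x1 x0]; apply: G0.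
have zero_eq1 : (0 == 1 :> F) = false by rewrite eq_sym oner_eq0.
rewrite /nb_proj_points -natz cardsE -sum_ind_card sum_triple /= sum10; last first.
  move=> x x1 x0; rewrite big1 // => y _; rewrite big1 // => z _.
  by rewrite /proj_rep (negbTE x1) (negbTE x0).
congr (_ + _); first by rewrite /proj_rep eqxx.
rewrite sum10; last first.
  move=> y y1 y0; rewrite big1 // => z _.
  by rewrite /proj_rep (negbTE y1) (negbTE y0) zero_eq1 eqxx.
congr (_ + _); first by rewrite /proj_rep !eqxx zero_eq1.
rewrite sum10; last by move=> z z1 z0; rewrite /proj_rep (negbTE z1) zero_eq1 eqxx andbF.
by rewrite /proj_rep !eqxx zero_eq1 /= addr0.
Qed.

Lemma nb_cone_points_proj (P : F -> F -> F -> F) (d : nat) :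
  (forall c x y z, P (c * x) (c * y) (c * z) = c ^+ d * P x y z) -> (0 < d)%N ->
  nb_cone_points P = 1 + (q - 1) * (nb_proj_points P)%:Z.
Proof.
move=> homP d_gt0.
have homP0 c x y z : c != 0 -> (P x y z == 0) = (P (c * x) (c * y) (c * z) == 0).
  by move=> c0; rewrite homP mulf_eq0 expf_eq0 (negbTE c0) andbF.
have P000 : P 0 0 0 = 0.
  by have := homP 0 0 0 0; rewrite !mul0r expr0n (negbTE (lt0n_neq0 d_gt0)) mul0r.
have sum_x : nb_cone_points P = \sum_y \sum_z ind (P 0 y z == 0)
    + (q - 1) * \sum_y \sum_z ind (P 1 y z == 0).
  apply: sum_split_nonzero_const => c c0.
  rewrite -(sum_reindex_mull _ c0); apply: eq_bigr => y _.
  rewrite -(sum_reindex_mull _ c0); apply: eq_bigr => z _.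
  by rewrite [in RHS](homP0 c _ _ _ c0) mulr1.
have sum_y : \sum_y \sum_z ind (P 0 y z == 0) = \sum_z ind (P 0 0 z == 0)
    + (q - 1) * \sum_z ind (P 0 1 z == 0).
  apply: sum_split_nonzero_const => c c0.
  rewrite -(sum_reindex_mull _ c0); apply: eq_bigr => z _.
  by rewrite [in RHS](homP0 c _ _ _ c0) mulr0 mulr1.
have sum_z : \sum_z ind (P 0 0 z == 0) = 1 + (q - 1) * ind (P 0 0 1 == 0).
  rewrite sum_split_nonzero_const ?P000 ?eqxx // => c c0.
  by rewrite [in RHS](homP0 c _ _ _ c0) mulr0 mulr1.
by rewrite sum_x sum_y sum_z nb_proj_points_charts; ring.
Qed.

End ProjectiveCount.

Section ReciprocalSubstitution.
Variable F : finFieldType.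
Hypothesis two_neq0 : (2%:R : F) != 0.

Lemma nroots_add_inv (s : F) :
  \sum_(t : F | t != 0) ind (s == t + t^-1) = nsqrt (s ^+ 2 - 4%:R).
Proof.
have := nroots_quadratic two_neq0 (- s) 1; rewrite sqrrN mulr1 => <-.
rewrite [RHS](bigD1 0) //= expr0n /= mulr0 !add0r oner_eq0 add0r.
apply: eq_bigr => t t0; congr (_%:R).
have -> : t ^+ 2 + - s * t + 1 = t * (t + t^-1 - s) by field.
by rewrite mulf_eq0 (negbTE t0) subr_eq0 eq_sym.
Qed.

(* t (al t^2 + be t + al) = t^2 (al s + be) with s = t + 1/t, and each s is
   reached nsqrt (s^2 - 4) times. *)
Lemma chi_sum_reciprocal_cubic (al be : F) : al != 0 ->
  \sum_(t : F) chi (t * (al * t ^+ 2 + be * t + al)) =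
  \sum_(s : F) chi ((s ^+ 2 - 4%:R) * (al * s + be)).
Proof.
move=> al0; rewrite (bigD1 0) //= mul0r chi0 add0r.
rewrite (eq_bigr (fun t => \sum_s ind (s == t + t^-1) * chi (al * s + be))); last first.
  move=> t t0; rewrite sum_ind_eq_mul.
  have -> : t * (al * t ^+ 2 + be * t + al) = t ^+ 2 * (al * (t + t^-1) + be) by field.
  by rewrite chi_sqrM.
rewrite exchange_big /=.
rewrite (eq_bigr (fun s => chi (al * s + be) + chi ((s ^+ 2 - 4%:R) * (al * s + be)))).
  by rewrite big_split /= chi_affine_sum // add0r.
by move=> s _; rewrite -mulr_suml nroots_add_inv chi_mul // /chi; ring.
Qed.

End ReciprocalSubstitution.

Section QuarticCount.
Variables (F : finFieldType) (lam : F).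
Hypotheses (two_neq0 : (2%:R : F) != 0) (lam_neq0 : lam != 0).
Hypotheses (lam_neq1 : lam != 1) (lam_neqN3 : lam != -3).
Local Notation q := (#|F|%:R : int).

Definition conic_Q (X Y Z : F) : F :=
  X ^+ 2 + Y ^+ 2 + Z ^+ 2 - (lam + 1) * (X * Y + Y * Z + Z * X).

Local Notation al := ((lam + 1) ^+ 2 - 4%:R).
Local Notation be := (2%:R * (lam + 1) ^+ 2 + 4%:R * (lam + 1)).

Definition disc_Q (X Y : F) : F := al * X ^+ 2 + be * X * Y + al * Y ^+ 2.

Definition chi_sum_E : int := \sum_(x : F) chi ((lam + 3) * (x * (x - 1) * (x - lam))).

Lemma lam_add3_neq0 : lam + 3 != 0.
Proof. by rewrite addr_eq0. Qed.

Lemma lam_sub1_neq0 : lam - 1 != 0.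
Proof. by rewrite subr_eq0. Qed.

Lemma al_neq0 : al != 0.
Proof.
have -> : al = (lam + 3) * (lam - 1) by ring.
by rewrite mulf_neq0 ?lam_add3_neq0 ?lam_sub1_neq0.
Qed.

Lemma disc_Q_nondegenerate : be ^+ 2 - 4%:R * al * al != 0.
Proof.
have -> : be ^+ 2 - 4%:R * al * al = 2%:R ^+ 4 * (lam + 3) ^+ 2 * lam by ring.
by rewrite !mulf_neq0 ?expf_neq0 ?lam_add3_neq0.
Qed.

Lemma nroots_conic_Q (X Y : F) : \sum_(Z : F) ind (conic_Q X Y Z == 0) = nsqrt (disc_Q X Y).
Proof.
have -> : disc_Q X Y =
    (- (lam + 1) * (X + Y)) ^+ 2 - 4%:R * (X ^+ 2 + Y ^+ 2 - (lam + 1) * X * Y).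
  by rewrite /disc_Q; ring.
rewrite -nroots_quadratic //; apply: eq_bigr => Z _.
by rewrite /conic_Q; congr (_ == 0)%:R; ring.
Qed.

Lemma disc_QZ (c X Y : F) : disc_Q (c * X) (c * Y) = c ^+ 2 * disc_Q X Y.
Proof. by rewrite /disc_Q; ring. Qed.

Lemma chi_sum_disc_Q : \sum_(X : F) \sum_(Y : F) chi (disc_Q X Y) = 0.
Proof.
have discX0 X : disc_Q X 0 = X ^+ 2 * al by rewrite /disc_Q; ring.
have discX1 X : disc_Q X 1 = al * X ^+ 2 + be * X + al by rewrite /disc_Q; ring.
rewrite exchange_big /= sum_split_nonzero_const => [|c c0]; last first.
  rewrite -(sum_reindex_mull _ c0); apply: eq_bigr => X _.
  by rewrite -{2}[c]mulr1 disc_QZ chi_sqrM.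
rewrite sum_split_nonzero_const => [|c c0]; last by rewrite !discX0 chi_sqrM ?expr1n ?mul1r.
have disc00 : disc_Q 0 0 = 0 by rewrite /disc_Q; ring.
under eq_bigr do rewrite discX1.
rewrite disc00 chi0 add0r chi_quadratic_sum ?al_neq0 ?disc_Q_nondegenerate //.
by rewrite discX0 expr1n mul1r -mulrDr addrN mulr0.
Qed.

Lemma sum_nsqrt_disc_Q : \sum_(X : F) \sum_(Y : F) nsqrt (disc_Q X Y) = q ^+ 2.
Proof.
have := chi_sum_disc_Q; rewrite /chi; under eq_bigr do rewrite sumrB.
rewrite sumrB => /eqP; rewrite subr_eq0 => /eqP ->.
by rewrite !sumr_const expr2 mulr_natr.
Qed.

(* The affine map x |-> mu x + nu sends 0, 1, lam to the roots - be / al, -2, 2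
   of (s^2 - 4) (al s + be). *)
Lemma chi_sum_disc_Q_dehomog : \sum_(t : F) chi (t * disc_Q t 1) = chi_sum_E.
Proof.
rewrite (eq_bigr (fun t => chi (t * (al * t ^+ 2 + be * t + al)))); last first.
  by move=> t _; rewrite /disc_Q; congr chi; ring.
rewrite chi_sum_reciprocal_cubic ?al_neq0 //.
pose mu := 2%:R ^+ 2 / (lam - 1); pose nu := - (2%:R * (lam + 1)) / (lam - 1).
have mu0 : mu != 0 by rewrite mulf_neq0 ?expf_neq0 ?invr_eq0 ?lam_sub1_neq0.
rewrite -(sum_reindex_affine nu _ mu0); apply: eq_bigr => x _.
have -> : ((mu * x + nu) ^+ 2 - 4%:R) * (al * (mu * x + nu) + be) =
    (2%:R ^+ 3 / (lam - 1)) ^+ 2 * ((lam + 3) * (x * (x - 1) * (x - lam))).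
  by rewrite /mu /nu; field; rewrite lam_sub1_neq0.
by rewrite chi_sqrM // mulf_neq0 ?expf_neq0 ?invr_eq0 ?lam_sub1_neq0.
Qed.

Lemma sum_chi_pair_nsqrt_disc_Q :
  \sum_(X : F) \sum_(Y : F) chi X * chi Y * nsqrt (disc_Q X Y) = (q - 1) * chi_sum_E.
Proof.
have nsqrtE X Y :
    chi X * chi Y * nsqrt (disc_Q X Y) = chi X * chi Y + chi (X * Y * disc_Q X Y).
  by rewrite !chi_mul // /chi; ring.
under eq_bigr do under eq_bigr do rewrite nsqrtE.
under eq_bigr do rewrite big_split /=.
rewrite big_split /= big1 => [|X _]; last by rewrite -mulr_sumr chi_sum mulr0.
rewrite add0r exchange_big /= sum_split_nonzero_const => [|c c0]; last first.
  rewrite -(sum_reindex_mull _ c0); apply: eq_bigr => X _.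
  rewrite -{4}[c]mulr1 disc_QZ.
  have -> : c * X * c * (c ^+ 2 * disc_Q X 1) = (c ^+ 2) ^+ 2 * (X * 1 * disc_Q X 1) by ring.
  by rewrite chi_sqrM ?expf_neq0.
rewrite big1 => [|X _]; last by rewrite mulr0 mul0r chi0.
rewrite add0r -chi_sum_disc_Q_dehomog; congr (_ * _); apply: eq_bigr => t _.
by rewrite mulr1.
Qed.

Lemma conic_QZ (c X Y Z : F) : conic_Q (c * X) (c * Y) (c * Z) = c ^+ 2 * conic_Q X Y Z.
Proof. by rewrite /conic_Q; ring. Qed.

Definition cone_Q_sum (w : F -> F -> F -> int) : int :=
  \sum_(p : F * F * F) ind (conic_Q p.1.1 p.1.2 p.2 == 0) * w p.1.1 p.1.2 p.2.

Lemma cone_Q_sum_rot (w : F -> F -> F -> int) :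
  cone_Q_sum (fun X Y Z => w Y Z X) = cone_Q_sum w.
Proof.
rewrite /cone_Q_sum (reindex_inj (h := fun p => (p.2, p.1.1, p.1.2))) /=; last first.
  by move=> [[? ?] ?] [[? ?] ?] [-> -> ->].
apply: eq_bigr => -[[X Y] Z] _ /=; congr ((_ == 0)%:R * _).
by rewrite /conic_Q; ring.
Qed.

Lemma cone_Q_sum_odd (w : F -> F -> F -> int) (c : F) : c != 0 ->
  (forall X Y Z, w (c * X) (c * Y) (c * Z) = - w X Y Z) -> cone_Q_sum w = 0.
Proof.
move=> c0 wN; have : cone_Q_sum w = - cone_Q_sum w.
  rewrite {1}/cone_Q_sum (reindex_inj (h := fun p => (c * p.1.1, c * p.1.2, c * p.2))) /=.
    rewrite /cone_Q_sum -sumrN; apply: eq_bigr => p _.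
    by rewrite conic_QZ mulf_eq0 expf_eq0 (negbTE c0) /= wN mulrN.
  by move=> [[? ?] ?] [[? ?] ?] /= [/(mulfI c0) -> /(mulfI c0) -> /(mulfI c0) ->].
by move=> e; lia.
Qed.

Lemma cone_Q_sum1 : cone_Q_sum (fun _ _ _ => 1) = q ^+ 2.
Proof.
rewrite /cone_Q_sum sum_triple -sum_nsqrt_disc_Q.
apply: eq_bigr => X _; apply: eq_bigr => Y _.
by rewrite -nroots_conic_Q; apply: eq_bigr => Z _; rewrite mulr1.
Qed.

Lemma cone_Q_sum_chi_pair : cone_Q_sum (fun X Y _ => chi X * chi Y) = (q - 1) * chi_sum_E.
Proof.
rewrite /cone_Q_sum sum_triple -sum_chi_pair_nsqrt_disc_Q.
apply: eq_bigr => X _; apply: eq_bigr => Y _.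
by rewrite -nroots_conic_Q mulr_sumr; apply: eq_bigr => Z _; rewrite mulrC.
Qed.

Lemma nb_cone_points_quartic_C :
  nb_cone_points (quartic_C lam) = q ^+ 2 + 3 * ((q - 1) * chi_sum_E).
Proof.
have quartic_sqr x y z : quartic_C lam x y z = conic_Q (x ^+ 2) (y ^+ 2) (z ^+ 2).
  by rewrite /quartic_C /conic_Q; ring.
have fiber : nb_cone_points (quartic_C lam) =
    cone_Q_sum (fun X Y Z => nsqrt X * nsqrt Y * nsqrt Z).
  rewrite /nb_cone_points /cone_Q_sum sum_triple.
  under eq_bigr do under eq_bigr do under eq_bigr do rewrite quartic_sqr.
  rewrite (sum_sqr_fiber (fun X => \sum_y \sum_z ind (conic_Q X (y ^+ 2) (z ^+ 2) == 0))).
  apply: eq_bigr => X _.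
  rewrite (sum_sqr_fiber (fun Y => \sum_z ind (conic_Q X Y (z ^+ 2) == 0))) mulr_sumr.
  apply: eq_bigr => Y _.
  rewrite (sum_sqr_fiber (fun Z => ind (conic_Q X Y Z == 0))) !mulr_sumr.
  by apply: eq_bigr => Z _ /=; ring.
have [c c0 cN1] := exists_nonsqr two_neq0.
have odd_part : cone_Q_sum (fun X Y Z => chi X + chi Y + chi Z + chi X * chi Y * chi Z) = 0.
  by apply: (cone_Q_sum_odd c0) => X Y Z; rewrite !chi_mul // cN1; ring.
have rotYZ : cone_Q_sum (fun _ Y Z => chi Y * chi Z) = cone_Q_sum (fun X Y _ => chi X * chi Y).
  exact: (cone_Q_sum_rot (fun X Y _ => chi X * chi Y)).
have rotZX : cone_Q_sum (fun X _ Z => chi Z * chi X) = cone_Q_sum (fun _ Y Z => chi Y * chi Z).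
  exact: (cone_Q_sum_rot (fun _ Y Z => chi Y * chi Z)).
transitivity (cone_Q_sum (fun _ _ _ => 1) + cone_Q_sum (fun X Y _ => chi X * chi Y)
    + cone_Q_sum (fun _ Y Z => chi Y * chi Z) + cone_Q_sum (fun X _ Z => chi Z * chi X)
    + cone_Q_sum (fun X Y Z => chi X + chi Y + chi Z + chi X * chi Y * chi Z)).
  by rewrite fiber /cone_Q_sum -!big_split; apply: eq_bigr => p _ /=; rewrite /chi; ring.
by rewrite odd_part rotZX rotYZ cone_Q_sum1 cone_Q_sum_chi_pair; ring.
Qed.

Lemma sum_cubic_E_chart :
  \sum_(x : F) \sum_(y : F) ind (cubic_E lam x y 1 == 0) = q + chi_sum_E.
Proof.
have lam3_neq0 := lam_add3_neq0.
have -> : q = \sum_(x : F) 1 by rewrite sumr_const.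
rewrite /chi_sum_E -big_split; apply: eq_bigr => x _ /=.
set f := x * (x - 1) * (x - lam).
have -> : 1 + chi ((lam + 3) * f) = nsqrt (f / (lam + 3)).
  rewrite /chi addrC subrK -(nsqrt_sqrM _ (s := (lam + 3)^-1)) ?invr_eq0 //.
  by congr nsqrt; field.
apply: eq_bigr => y _; congr (_%:R).
rewrite /cubic_E !mulr1 subr_eq0 -/f -[y ^+ 2 == _](inj_eq (mulfI lam3_neq0)).
by rewrite [_ * (f / _)]mulrC divfK.
Qed.

Lemma nb_cone_points_cubic_E : nb_cone_points (cubic_E lam) = q + (q - 1) * (q + chi_sum_E).
Proof.
rewrite /nb_cone_points; under eq_bigr do rewrite exchange_big; rewrite exchange_big /=.
rewrite sum_split_nonzero_const => [|c c0]; last first.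
  rewrite -(sum_reindex_mull _ c0); apply: eq_bigr => x _.
  rewrite -(sum_reindex_mull _ c0); apply: eq_bigr => y _.
  have -> : cubic_E lam (c * x) (c * y) c = c ^+ 3 * cubic_E lam x y 1.
    by rewrite /cubic_E; ring.
  by rewrite mulf_eq0 expf_eq0 (negbTE c0) andbF.
rewrite sum_cubic_E_chart; congr (_ + _).
have cubicE_z0 x y : cubic_E lam x y 0 = - x ^+ 3 by rewrite /cubic_E; ring.
under eq_bigr do under eq_bigr do rewrite cubicE_z0 oppr_eq0 expf_eq0 /=.
by rewrite exchange_big /= (eq_bigr (fun _ => 1)) ?sumr_const // => y _; apply: sum_ind_eq.
Qed.

End QuarticCount.

Lemma quartic_CZ (F : finFieldType) (lam c x y z : F) :
  quartic_C lam (c * x) (c * y) (c * z) = c ^+ 4 * quartic_C lam x y z.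
Proof. by rewrite /quartic_C; ring. Qed.

Lemma cubic_EZ (F : finFieldType) (lam c x y z : F) :
  cubic_E lam (c * x) (c * y) (c * z) = c ^+ 3 * cubic_E lam x y z.
Proof. by rewrite /cubic_E; ring. Qed.

Theorem mainTheorem2 (F : finFieldType) (lam : F) :
  (2 \notin [pchar F])%N -> lam != 0 -> lam != 1 -> lam != -3 ->
  (nb_proj_points (quartic_C lam))%:Z =
    3 * (nb_proj_points (cubic_E lam))%:Z - 2 * (#|F|)%:Z - 2.
Proof.
move=> char2 lam0 lam1 lam3.
have two_neq0 : (2%:R : F) != 0 by apply: contra char2 => two0; rewrite inE /= two0.
have countC := nb_cone_points_proj (quartic_CZ lam) isT.
have countE := nb_cone_points_proj (cubic_EZ lam) isT.
rewrite nb_cone_points_quartic_C // in countC.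
rewrite nb_cone_points_cubic_E // in countE.
set N := (nb_proj_points _)%:Z in countC *; set M := (nb_proj_points _)%:Z in countE *.
rewrite natz in countC countE *; set q := (#|F|)%:Z in countC countE *.
have q1_neq0 : q - 1 != 0 by rewrite subr_eq0 eqz_nat gtn_eqF // finNzRing_gt1.
apply: (mulfI q1_neq0); apply: (addrI 1); rewrite -countC.
have -> : 1 + (q - 1) * (3 * M - 2 * q - 2) =
    3 * (1 + (q - 1) * M) - 2 - (q - 1) * (2 * q + 2) by ring.
by rewrite -countE; ring.
Qed.
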